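(* Let $F:\mathcal{G}_{\Sigma,\Delta,\pi}\to\mathcal{G}_{\Sigma,\Delta,\pi}$ be a causal graph dynamics with a monotonic local rule $f$ of radius $r$, and assume that $\mathrm{Conj}_F(R)$ is a singleton $\{\overline{F}(R)\}$ for every renaming $R$. Let $G$ be a graph. Then the cocone $\theta^G:\widetilde{f}\circ\mathrm{Proj}_{\widetilde{i}/G}\Rightarrow F(G)$ whose component at an object $((H,C),m:H\to G)$ of $\widetilde{i}/G$ is the morphism $\theta^G_{((H,C),m)}:\widetilde{f}((H,C))\to F(G)$ with underlying renaming $\overline{F}(|m|)$, is a universal cocone, i.e. $F(G)$ together with $\theta^G$ is a colimit of $\widetilde{f}\circ\mathrm{Proj}_{\widetilde{i}/G}$.
   Context: Fix an uncountably infinite set $\mathcal{V}$, sets $\Sigma,\Delta$, finite $\pi$. Graphs: countable $V(G)\subset\mathcal{V}$, a set $E(G)$ of pairwise disjoint two-element subsets of $V(G)\times\pi$, partial labelings $\sigma(G),\delta(G)$; $\subseteq$ is componentwise inclusion. Renamings: bijections of $\mathcal{V}$ acting naturally on graphs/pointed graphs. $\mathrm{Conj}_F(R)=\{R'\mid F\circ R=R'\circ F\}$. Disk $G^r_c$: vertices at distance $\le r+1$ from $c$, edges with an endpoint at distance $\le r$, vertex labels restricted to distance $\le r$; $\mathcal{D}^r$ radius-$r$ disks, compared by inclusion with equal centers. A local rule of radius $r$: $f:\mathcal{D}^r\to$ graphs with renaming covariance, preservation of empty intersections, bounded output size, consistency of $f(G^r_u),f(G^r_v)$; CGD $F(G)=\bigcup_{v\in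 V(G)}f(G^r_v)$. Category $\mathbf{G}_{\Sigma,\Delta,\pi}$: objects graphs, morphism $m:G\to H$ a renaming $|m|$ with $|m|(G)\subseteq H$. Category $\mathbf{D}^r_{\Sigma,\Delta,\pi}$: objects $(H,\{c\})$ for $(H,c)\in\mathcal{D}^r$ and $(\varnothing,\emptyset)$; morphisms $m:(H_1,C_1)\to(H_2,C_2)$ are morphisms $H_1\to H_2$ with $|m|(C_1)\subseteq C_2$. $\widetilde{i}:\mathbf{D}^r\to\mathbf{G}$ drops the second component. $\widetilde{f}:\mathbf{D}^r\to\mathbf{G}$: $\widetilde{f}((H,\{c\}))=f((H,c))$, $\widetilde{f}((\varnothing,\emptyset))=\varnothing$, $|\widetilde{f}(m)|=\overline{F}(|m|)$. The comma category $\widetilde{i}/G$ has objects $((H,C),m:H\to G)$ and morphisms $n:((H_1,C_1),m\circ n)\to((H_2,C_2),m)$ for $n$ in $\mathbf{D}^r$; $\mathrm{Proj}_{\widetilde{i}/G}:\widetilde{i}/G\to\mathbf{D}^r$ is the first projection. *)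

From Stdlib Require Import List Arith FinFun.
Set Implicit Arguments.
Unset Strict Implicit.

Section CGD.
Variables (V Sig Del P : Type).
(* V = the vertex-name set \mathcal V, Sig = Sigma, Del = Delta, P = pi. *)

Definition port := (V * P)%type.

(* A (pre)graph: vertex set, set of edges (each edge is a subset of V x pi),
   partial vertex labelling and partial edge labelling given as relations. *)
Record graph := Graph {
  gV : V -> Prop;
  gE : (port -> Prop) -> Prop;
  gsig : V -> Sig -> Prop;
  gdel : (port -> Prop) -> Del -> Prop }.

Definition countable_set (S : V -> Prop) : Prop :=
  exists g : V -> nat, forall x y, S x -> S y -> g x = g y -> x = y.

Definition two_element_subset (G : graph) (e : port -> Prop) : Prop :=
  exists a b : port, a <> b /\ gV G (fst a) /\ gV G (fst b) /\
    (forall x, e x <-> x = a \/ x = b).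

Definition is_graph (G : graph) : Prop :=
  countable_set (gV G) /\
  (forall e, gE G e -> two_element_subset G e) /\
  (forall e e', gE G e -> gE G e' -> e <> e' -> forall x, ~ (e x /\ e' x)) /\
  (forall v a, gsig G v a -> gV G v) /\
  (forall v a b, gsig G v a -> gsig G v b -> a = b) /\
  (forall e a, gdel G e a -> gE G e) /\
  (forall e a b, gdel G e a -> gdel G e b -> a = b).

Definition empty_graph : graph :=
  Graph (fun _ => False) (fun _ => False) (fun _ _ => False) (fun _ _ => False).

Definition gincl (G H : graph) : Prop :=
  (forall v, gV G v -> gV H v) /\ (forall e, gE G e -> gE H e) /\
  (forall v a, gsig G v a -> gsig H v a) /\ (forall e a, gdel G e a -> gdel H e a).

Definition union2 (G H : graph) : graph :=
  Graph (fun v => gV G v \/ gV H v) (fun e => gE G e \/ gE H e)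
        (fun v a => gsig G v a \/ gsig H v a) (fun e a => gdel G e a \/ gdel H e a).

Definition bigunion (I : V -> Prop) (g : V -> graph) : graph :=
  Graph (fun v => exists i, I i /\ gV (g i) v)
        (fun e => exists i, I i /\ gE (g i) e)
        (fun v a => exists i, I i /\ gsig (g i) v a)
        (fun e a => exists i, I i /\ gdel (g i) e a).

Definition renaming (R : V -> V) : Prop :=
  (forall x y, R x = R y -> x = y) /\ (forall y, exists x, R x = y).

Definition rename (R : V -> V) (G : graph) : graph :=
  Graph (fun w => exists v, gV G v /\ R v = w)
        (fun e' => gE G (fun x : port => e' (R (fst x), snd x)))
        (fun w a => exists v, R v = w /\ gsig G v a)
        (fun e' a => gdel G (fun x : port => e' (R (fst x), snd x)) a).

Definition adj (G : graph) (u v : V) : Prop :=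
  exists (p q : P) e, gE G e /\ e (u, p) /\ e (v, q) /\ (u, p) <> (v, q).

Fixpoint within (G : graph) (c : V) (n : nat) (v : V) : Prop :=
  match n with
  | 0 => gV G c /\ v = c
  | S k => within G c k v \/ exists u, within G c k u /\ adj G u v
  end.

Definition disk_edge (G : graph) (r : nat) (c : V) (e : port -> Prop) : Prop :=
  gE G e /\ exists u p, e (u, p) /\ within G c r u.

Definition disk (G : graph) (r : nat) (c : V) : graph :=
  Graph (fun v => within G c (S r) v)
        (disk_edge G r c)
        (fun v a => gsig G v a /\ within G c r v)
        (fun e a => gdel G e a /\ disk_edge G r c e).

Definition is_disk (r : nat) (H : graph) (c : V) : Prop :=
  exists G, is_graph G /\ gV G c /\ H = disk G r c.

Definition is_local_rule (f : graph -> V -> graph) (r : nat) : Prop :=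
  (forall H c, is_disk r H c -> is_graph (f H c)) /\
  (forall R, renaming R -> exists R', renaming R' /\
     forall H c, is_disk r H c -> f (rename R H) (R c) = rename R' (f H c)) /\
  (forall H1 c1 H2 c2, is_disk r H1 c1 -> is_disk r H2 c2 ->
     (forall v, ~ (gV H1 v /\ gV H2 v)) ->
     forall v, ~ (gV (f H1 c1) v /\ gV (f H2 c2) v)) /\
  (exists b : nat, forall H c, is_disk r H c ->
     exists l : list V, length l <= b /\ forall v, gV (f H c) v -> In v l) /\
  (forall G u v, is_graph G -> gV G u -> gV G v ->
     is_graph (union2 (f (disk G r u) u) (f (disk G r v) v))).

Definition monotonic_rule (f : graph -> V -> graph) (r : nat) : Prop :=
  forall H1 H2 c, is_disk r H1 c -> is_disk r H2 c -> gincl H1 H2 ->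
    gincl (f H1 c) (f H2 c).

Definition CGD (f : graph -> V -> graph) (r : nat) (G : graph) : graph :=
  bigunion (gV G) (fun v => f (disk G r v) v).

Definition Conj (F : graph -> graph) (R R' : V -> V) : Prop :=
  renaming R' /\ forall G, is_graph G -> F (rename R G) = rename R' (F G).

Definition gmorph (m : V -> V) (G H : graph) : Prop :=
  renaming m /\ gincl (rename m G) H.

(* objects of D^r : (H,{c}) encoded (H, Some c), (empty, {}) encoded (empty, None) *)
Definition D_obj (r : nat) (H : graph) (C : option V) : Prop :=
  match C with
  | Some c => is_disk r H c
  | None => H = empty_graph
  end.

Definition D_morph (n : V -> V) (H1 : graph) (C1 : option V)
  (H2 : graph) (C2 : option V) : Prop :=
  gmorph n H1 H2 /\
  match C1 with
  | Some c1 => exists c2, C2 = Some c2 /\ n c1 = c2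
  | None => True
  end.

Definition ftilde (f : graph -> V -> graph) (H : graph) (C : option V) : graph :=
  match C with
  | Some c => f H c
  | None => empty_graph
  end.

Definition comma_obj (r : nat) (G H : graph) (C : option V) (m : V -> V) : Prop :=
  D_obj r H C /\ gmorph m H G.

Definition comma_morph (H1 : graph) (C1 : option V) (m1 : V -> V)
  (H2 : graph) (C2 : option V) (m2 : V -> V) (n : V -> V) : Prop :=
  D_morph n H1 C1 H2 C2 /\ m1 = (fun x => m2 (n x)).

(* a cocone over \widetilde f o Proj with vertex X, given by a family lam of
   underlying renamings indexed by objects of the comma category; the
   morphism \widetilde f (n) has underlying renaming Fbar n *)
Definition is_cocone (r : nat) (f : graph -> V -> graph) (Fbar : (V -> V) -> (V -> V))
  (G X : graph) (lam : graph -> option V -> (V -> V) -> (V -> V)) : Prop :=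
  (forall H C m, comma_obj r G H C m -> gmorph (lam H C m) (ftilde f H C) X) /\
  (forall H1 C1 m1 H2 C2 m2 n,
     comma_obj r G H1 C1 m1 -> comma_obj r G H2 C2 m2 ->
     comma_morph H1 C1 m1 H2 C2 m2 n ->
     lam H1 C1 m1 = (fun x => lam H2 C2 m2 (Fbar n x))).

Definition is_universal_cocone (r : nat) (f : graph -> V -> graph)
  (Fbar : (V -> V) -> (V -> V)) (G L : graph)
  (theta : graph -> option V -> (V -> V) -> (V -> V)) : Prop :=
  is_cocone r f Fbar G L theta /\
  forall X lam, is_graph X -> is_cocone r f Fbar G X lam ->
    exists u, gmorph u L X /\
      (forall H C m, comma_obj r G H C m -> (fun x => u (theta H C m x)) = lam H C m) /\
      (forall u', gmorph u' L X ->
         (forall H C m, comma_obj r G H C m -> (fun x => u' (theta H C m x)) = lam H C m) ->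
         u' = u).

End CGD.

From Stdlib Require Import List Arith FinFun.
From Stdlib Require Import FunctionalExtensionality PropExtensionality ClassicalEpsilon.

(* Uniqueness of conjugates makes [Fbar] a functor on renamings, and also forces
   [Fbar R] to be the covariance witness of the local rule for [R], since that
   witness conjugates [F]. Monotonicity then places each renamed [f (H, c)]
   inside [F G], so the [Fbar m] form a cocone. Conversely, for every renaming [m]
   the comma category contains [((empty, {}), m)], from which [id] goes to
   [((H, C), m)] and [m] goes to [((empty, {}), id)]. Hence every cocone [lam]
   factors as [lam_((H,C),m) = lam_((empty,{}),id) o Fbar m]. Since [F G] is the
   union of the [f (G^r_v)] and [Fbar id = id], the components at
   [((G^r_v, {v}), id)] show that [lam_((empty,{}),id)] maps [F G] into the
   target; it is then the unique mediating morphism. *)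

Section Renamings.
Context {V : Type}.

Lemma renaming_id : renaming (fun x : V => x).
Proof. split; [auto | intro y; exists y; reflexivity]. Qed.

Lemma renaming_comp (m n : V -> V) :
  renaming m -> renaming n -> renaming (fun x => m (n x)).
Proof.
  intros [minj msurj] [ninj nsurj]; split; [auto |].
  intro z; destruct (msurj z) as [y <-]; destruct (nsurj y) as [x <-]; exists x; reflexivity.
Qed.

Lemma renaming_bijective (R : V -> V) : renaming R -> Bijective R.
Proof.
  intros [Rinj Rsurj].
  exists (fun y => proj1_sig (constructive_indefinite_description _ (Rsurj y))).
  split; intro; [apply Rinj |]; apply proj2_sig.
Qed.

End Renamings.

Section Graphs.
Context {V Sig Del P : Type}.
Implicit Types (G H X : graph V Sig Del P) (R m n : V -> V).

Lemma graph_ext G H :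
  (forall v, gV G v <-> gV H v) -> (forall e, gE G e <-> gE H e) ->
  (forall v a, gsig G v a <-> gsig H v a) -> (forall e a, gdel G e a <-> gdel H e a) ->
  G = H.
Proof.
  destruct G, H; simpl; intros; f_equal;
    repeat (apply functional_extensionality; intro); apply propositional_extensionality; auto.
Qed.

Lemma rename_id G : rename (fun x => x) G = G.
Proof.
  assert (port_eta : forall e : port V P -> Prop, (fun x => e (fst x, snd x)) = e).
  { intro e; apply functional_extensionality; intros []; reflexivity. }
  apply graph_ext; simpl; intros; rewrite ?port_eta; firstorder (subst; eauto).
Qed.

Lemma rename_comp m n G : rename (fun x => m (n x)) G = rename m (rename n G).
Proof. apply graph_ext; simpl; firstorder (subst; eauto). Qed.

Lemma is_graph_rename R G : renaming R -> is_graph G -> is_graph (rename R G).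
Proof.
  intros HR [Gcount [Gedge [Gdisj [Gsig_V [Gsig_fun [Gdel_E Gdel_fun]]]]]].
  destruct (renaming_bijective _ HR) as [Rinv [Rinv_R R_Rinv]].
  assert (port_inj : forall y y' (p p' : P), (R y, p) = (R y', p') <-> (y, p) = (y', p')).
  { split; intro E; inversion E; [f_equal; apply (proj1 HR) |]; congruence. }
  assert (port_back : forall (e : port V P -> Prop) x,
             e x <-> e (R (fst (Rinv (fst x), snd x)), snd (Rinv (fst x), snd x))).
  { intros e [x p]; simpl; rewrite R_Rinv; reflexivity. }
  repeat split; simpl.
  - destruct Gcount as [g g_inj]; exists (fun w => g (Rinv w)).
    intros x y [v [Hv <-]] [w [Hw <-]]; rewrite !Rinv_R; intro E; f_equal; auto.
  - intros e He; destruct (Gedge _ He) as [[a p] [[b q] [ab [Ha [Hb Hx]]]]].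
    exists (R a, p), (R b, q); repeat split; simpl; eauto.
    + rewrite port_inj; exact ab.
    + destruct x as [y s]; intro Hys; apply (port_back e), Hx in Hys; simpl in Hys.
      rewrite <- (R_Rinv y), !port_inj; exact Hys.
    + destruct x as [y s]; intro Hys; apply (port_back e), Hx; simpl.
      rewrite <- (R_Rinv y), !port_inj in Hys; exact Hys.
  - intros e e' He He' ee' x [Hex He'x].
    apply (Gdisj _ _ He He') with (Rinv (fst x), snd x);
      [| split; [apply (port_back e x) | apply (port_back e' x)]; assumption].
    intro E; apply ee', functional_extensionality; intros [y s].
    apply (f_equal (fun h => h (Rinv y, s))) in E; simpl in E; rewrite R_Rinv in E; exact E.
  - intros w a [v [<- Hv]]; eauto.
  - intros w a b [v [<- Hv]] [v' [E Hv']]; apply (proj1 HR) in E; subst; eauto.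
  - eauto.
  - eauto.
Qed.

Lemma adj_rename R G u v : renaming R -> adj (rename R G) (R u) (R v) <-> adj G u v.
Proof.
  intro HR; destruct (renaming_bijective _ HR) as [Rinv [Rinv_R _]].
  split; intros [p [q [e [He [Hu [Hv uv]]]]]]; simpl in He.
  - exists p, q, (fun x => e (R (fst x), snd x)); repeat split; auto.
    intro E; apply uv; congruence.
  - exists p, q, (fun x => e (Rinv (fst x), snd x)); simpl; rewrite !Rinv_R; repeat split; auto.
    + change (gE G (fun x => e (Rinv (R (fst x)), snd x))).
      replace (fun x : port V P => e (Rinv (R (fst x)), snd x)) with e; auto.
      apply functional_extensionality; intros []; simpl; rewrite Rinv_R; reflexivity.
    + intro E; apply uv; injection E; intros ? Euv; apply (proj1 HR) in Euv; congruence.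
Qed.

Lemma within_rename R G c k w : renaming R ->
  within (rename R G) (R c) k w <-> exists v, within G c k v /\ R v = w.
Proof.
  intro HR; destruct (renaming_bijective _ HR) as [Rinv [_ R_Rinv]].
  revert w; induction k as [|k IH]; intro w; simpl.
  - split.
    + intros [[v [Hv Ev]] ->]; apply (proj1 HR) in Ev; subst; eauto.
    + intros [v [[Hc ->] <-]]; eauto.
  - split.
    + intros [Hw | [u [Hu Huw]]]; [apply IH in Hw; firstorder |].
      apply IH in Hu; destruct Hu as [u' [Hu' <-]].
      rewrite <- (R_Rinv w), adj_rename in Huw by exact HR.
      exists (Rinv w); split; eauto.
    + intros [v [[Hv | [u [Hu Huv]]] <-]]; [left; apply IH; eauto |].
      right; exists (R u); split; [apply IH; eauto | apply adj_rename; auto].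
Qed.

Lemma disk_edge_rename R G r c e : renaming R ->
  disk_edge (rename R G) r (R c) e <-> disk_edge G r c (fun x => e (R (fst x), snd x)).
Proof.
  intro HR; unfold disk_edge; simpl; split.
  - intros [He [w [p [Hwp Hw]]]]; apply within_rename in Hw as [v [Hv <-]]; eauto.
  - intros [He [v [p [Hvp Hv]]]]; split; auto.
    exists (R v), p; split; auto; apply within_rename; eauto.
Qed.

Lemma disk_rename R G r c : renaming R -> disk (rename R G) r (R c) = rename R (disk G r c).
Proof.
  intro HR; apply graph_ext; simpl.
  - intro w; exact (within_rename R G c (S r) w HR).
  - intro e; apply disk_edge_rename, HR.
  - intros w a; rewrite within_rename by exact HR; split.
    + intros [[v [<- Hv]] [v' [Hv' Ev]]]; apply (proj1 HR) in Ev; subst; eauto.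
    + intros [v [<- [Hv Hcv]]]; split; eauto.
  - intros e a; rewrite disk_edge_rename by exact HR; reflexivity.
Qed.

Lemma within_mono G c k k' v : k <= k' -> within G c k v -> within G c k' v.
Proof. induction 1; simpl; auto. Qed.

Lemma within_gV G c k v : is_graph G -> within G c k v -> gV G v.
Proof.
  intros [_ [Gedge _]]; revert v; induction k as [|k IH]; simpl.
  - intros v [Hc ->]; exact Hc.
  - intros v [Hv | [u [_ [p [q [e [He [_ [Hv _]]]]]]]]]; auto.
    destruct (Gedge e He) as [a [b [_ [Ha [Hb Hab]]]]].
    destruct (proj1 (Hab _) Hv) as [<- | <-]; assumption.
Qed.

Lemma disk_center G r c : gV G c -> gV (disk G r c) c.
Proof. intro Hc; apply within_mono with 0; [apply Nat.le_0_l | split; auto]. Qed.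

Lemma gincl_trans G H X : gincl G H -> gincl H X -> gincl G X.
Proof. unfold gincl; intuition. Qed.

Lemma gincl_disk G r c : is_graph G -> gincl (disk G r c) G.
Proof.
  intro HG; repeat split; simpl.
  - intros v Hv; exact (within_gV G c (S r) v HG Hv).
  - intros e [He _]; exact He.
  - intros v a [Hva _]; exact Hva.
  - intros e a [Hea _]; exact Hea.
Qed.

Lemma gincl_disk_disk G H r c : gincl (disk H r c) G -> gincl (disk H r c) (disk G r c).
Proof.
  intros [HV [HE [Hsig Hdel]]].
  assert (within_G : forall k v, k <= S r -> within H c k v -> within G c k v).
  { induction k as [|k IH]; intros v Hk; simpl.
    - intros [Hc ->]; split; auto.
      apply HV; apply within_mono with 0; [apply Nat.le_0_l | simpl; auto].
    - intros [Hv | [u [Hu [p [q [e [He [Hup [Hvq uv]]]]]]]]]; [left; apply IH; auto with arith |].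
      right; exists u; split; [apply IH; auto with arith |].
      exists p, q, e; repeat split; auto.
      apply HE; split; auto.
      exists u, p; split; auto; apply within_mono with k; auto with arith. }
  assert (disk_edge_G : forall e, disk_edge H r c e -> disk_edge G r c e).
  { intros e [He [u [p [Hup Hu]]]]; split; [apply HE; split |]; eauto 6. }
  split; [|split; [|split]]; simpl.
  - intros v Hv; exact (within_G (S r) v (le_n _) Hv).
  - exact disk_edge_G.
  - intros v a [Hva Hv]; split; [apply Hsig; split |]; auto; apply within_G; auto.
  - intros e a [Hea He]; split; [apply Hdel; split |]; auto.
Qed.

Lemma gincl_bigunion (I : V -> Prop) (g : V -> graph V Sig Del P) i :
  I i -> gincl (g i) (bigunion I g).
Proof. intro Hi; repeat split; simpl; eauto. Qed.

Lemma bigunion_gincl (I : V -> Prop) (g : V -> graph V Sig Del P) X :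
  (forall i, I i -> gincl (g i) X) -> gincl (bigunion I g) X.
Proof. unfold gincl; simpl; firstorder. Qed.

Lemma bigunion_ext (I : V -> Prop) (g g' : V -> graph V Sig Del P) :
  (forall i, I i -> g i = g' i) -> bigunion I g = bigunion I g'.
Proof.
  intro Hgg'; apply graph_ext; simpl; intros;
    split; intros [i [Hi Hx]]; exists i; rewrite ?Hgg' in * by exact Hi; auto.
Qed.

Lemma bigunion_image (I : V -> Prop) (g : V -> graph V Sig Del P) R :
  bigunion (fun w => exists v, I v /\ R v = w) g = bigunion I (fun v => g (R v)).
Proof. apply graph_ext; simpl; firstorder (subst; eauto). Qed.

Lemma rename_bigunion (I : V -> Prop) (g : V -> graph V Sig Del P) R :
  rename R (bigunion I g) = bigunion I (fun i => rename R (g i)).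
Proof. apply graph_ext; simpl; firstorder (subst; eauto). Qed.

Lemma gmorph_empty m X : renaming m -> gmorph m (empty_graph V Sig Del P) X.
Proof. intro Hm; split; [exact Hm |]; repeat split; simpl; firstorder. Qed.

Lemma CGD_rename f r R R' G : renaming R -> is_graph G ->
  (forall H c, is_disk r H c -> f (rename R H) (R c) = rename R' (f H c)) ->
  CGD f r (rename R G) = rename R' (CGD f r G).
Proof.
  intros HR HG Hcov; unfold CGD.
  rewrite rename_bigunion.
  change (gV (rename R G)) with (fun w => exists v, gV G v /\ R v = w).
  rewrite bigunion_image; apply bigunion_ext; intros v Hv.
  rewrite disk_rename by exact HR; apply Hcov; exists G; auto.
Qed.

Lemma comma_obj_empty r G m : renaming m -> comma_obj r G (empty_graph V Sig Del P) None m.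
Proof. intro Hm; split; [reflexivity | apply gmorph_empty, Hm]. Qed.

Lemma comma_morph_empty H C m n : renaming n ->
  comma_morph (empty_graph V Sig Del P) None (fun x => m (n x)) H C m n.
Proof. intro Hn; split; [split; [apply gmorph_empty, Hn | exact I] | reflexivity]. Qed.

End Graphs.

Section ConjugateRenamings.
Context {V Sig Del P : Type} {f : graph V Sig Del P -> V -> graph V Sig Del P} {r : nat}
  {Fbar : (V -> V) -> V -> V}.
Hypothesis Conj_unique : forall R, renaming R -> forall R', Conj (CGD f r) R R' <-> R' = Fbar R.

Lemma Fbar_conj R : renaming R -> Conj (CGD f r) R (Fbar R).
Proof. intro HR; apply (Conj_unique R HR); reflexivity. Qed.

Lemma Fbar_renaming R : renaming R -> renaming (Fbar R).
Proof. intro HR; exact (proj1 (Fbar_conj R HR)). Qed.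

Lemma Fbar_id : Fbar (fun x => x) = (fun x => x).
Proof.
  symmetry; apply (Conj_unique _ renaming_id); split; [exact renaming_id |].
  intros G _; rewrite !rename_id; reflexivity.
Qed.

Lemma Fbar_comp m n : renaming m -> renaming n ->
  Fbar (fun x => m (n x)) = (fun x => Fbar m (Fbar n x)).
Proof.
  intros Hm Hn; symmetry; apply (Conj_unique _ (renaming_comp _ _ Hm Hn)); split.
  - apply renaming_comp; apply Fbar_renaming; assumption.
  - intros G HG; rewrite (rename_comp m n), (rename_comp (Fbar m) (Fbar n)).
    rewrite (proj2 (Fbar_conj m Hm)) by (apply is_graph_rename; assumption).
    rewrite (proj2 (Fbar_conj n Hn)) by exact HG; reflexivity.
Qed.

Lemma local_rule_covariance_Fbar R H c : is_local_rule f r -> renaming R -> is_disk r H c ->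
  f (rename R H) (R c) = rename (Fbar R) (f H c).
Proof.
  intros [_ [covariance _]] HR; revert H c.
  destruct (covariance R HR) as [R' [HR' covR']].
  replace (Fbar R) with R'; [exact covR' |].
  apply (Conj_unique R HR); split; [exact HR' | intros G HG; apply CGD_rename; assumption].
Qed.

Lemma Fbar_component_gmorph G H C m :
  is_graph G -> is_local_rule f r -> monotonic_rule f r -> comma_obj r G H C m ->
  gmorph (Fbar m) (ftilde f H C) (CGD f r G).
Proof.
  intros HG Hloc Hmono [HD [Hm Hincl]].
  destruct C as [c |]; simpl in *; [| subst H; apply gmorph_empty, Fbar_renaming, Hm].
  split; [apply Fbar_renaming, Hm |].
  rewrite <- (local_rule_covariance_Fbar m H c Hloc Hm HD).
  destruct HD as [G1 [HG1 [Hc ->]]].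
  rewrite <- disk_rename in * by exact Hm.
  assert (HmcG : gV G (m c)) by (apply (proj1 Hincl), disk_center; simpl; eauto).
  apply gincl_trans with (f (disk G r (m c)) (m c)).
  - apply Hmono; [| exists G; auto | apply gincl_disk_disk, Hincl].
    exists (rename m G1); split; [apply is_graph_rename |]; simpl; eauto.
  - apply gincl_bigunion with (g := fun v => f (disk G r v) v); exact HmcG.
Qed.

Lemma theta_cocone G : is_graph G -> is_local_rule f r -> monotonic_rule f r ->
  is_cocone r f Fbar G (CGD f r G) (fun _ _ m => Fbar m).
Proof.
  intros HG Hloc Hmono; split.
  - intros H C m HO; apply Fbar_component_gmorph; assumption.
  - intros H1 C1 m1 H2 C2 m2 n _ [_ [Hm2 _]] [[[Hn _] _] ->]; apply Fbar_comp; assumption.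
Qed.

Lemma cocone_factors_through_empty G X lam H C m :
  is_cocone r f Fbar G X lam -> comma_obj r G H C m ->
  lam H C m = (fun x => lam (empty_graph V Sig Del P) None (fun y => y) (Fbar m x)).
Proof.
  intros [_ lam_natural] HO; pose proof (proj1 (proj2 HO)) as Hm.
  transitivity (lam (empty_graph V Sig Del P) None m).
  - rewrite (lam_natural _ _ _ H C m (fun x => x) (comma_obj_empty r G m Hm) HO
               (comma_morph_empty H C m (fun x => x) renaming_id)), Fbar_id.
    reflexivity.
  - exact (lam_natural _ _ _ _ _ _ m (comma_obj_empty r G m Hm)
             (comma_obj_empty r G _ renaming_id) (comma_morph_empty _ _ (fun y => y) m Hm)).
Qed.

Lemma cocone_mediator_gmorph G X lam : is_graph G -> is_cocone r f Fbar G X lam ->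
  gmorph (lam (empty_graph V Sig Del P) None (fun x => x)) (CGD f r G) X.
Proof.
  intros HG Hlam.
  split; [exact (proj1 (proj1 Hlam _ _ _ (comma_obj_empty r G _ renaming_id))) |].
  unfold CGD; rewrite rename_bigunion; apply bigunion_gincl; intros v Hv.
  assert (Hdisk : comma_obj r G (disk G r v) (Some v) (fun x => x)).
  { split; [exists G; auto | split; [exact renaming_id | rewrite rename_id; apply gincl_disk, HG]]. }
  pose proof (proj2 (proj1 Hlam _ _ _ Hdisk)) as Hincl.
  rewrite (cocone_factors_through_empty G X lam _ _ _ Hlam Hdisk), Fbar_id in Hincl.
  exact Hincl.
Qed.

End ConjugateRenamings.

Theorem proposition4p22 (V Sig Del P : Type)
  (V_uncountable : ~ exists g : V -> nat, Injective g)
  (P_finite : Finite P)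
  (f : graph V Sig Del P -> V -> graph V Sig Del P) (r : nat)
  (Hloc : is_local_rule f r) (Hmono : monotonic_rule f r)
  (Fbar : (V -> V) -> (V -> V))
  (HConj : forall R, renaming R ->
     forall R', Conj (CGD f r) R R' <-> R' = Fbar R)
  (G : graph V Sig Del P) (HG : is_graph G) :
  is_universal_cocone r f Fbar G (CGD f r G)
    (fun (H : graph V Sig Del P) (C : option V) (m : V -> V) => Fbar m).
Proof.
  split; [exact (theta_cocone HConj G HG Hloc Hmono) |].
  intros X lam _ Hlam.
  exists (lam (empty_graph V Sig Del P) None (fun x => x)); split; [| split].
  - exact (cocone_mediator_gmorph HConj G X lam HG Hlam).
  - intros H C m HO; symmetry; exact (cocone_factors_through_empty HConj G X lam H C m Hlam HO).
  - intros u _ Hu.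
    rewrite <- (Hu _ _ _ (comma_obj_empty r G _ renaming_id)), (Fbar_id HConj); reflexivity.
Qed.
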